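(* When the algorithm Classifier is run on any configuration $G$ with $n$ nodes, there exists an iteration $i\in\{1,\ldots,\lceil n/2\rceil\}$ of its main loop in which either the ''Yes'' condition or the ''No'' condition holds, so that Classifier terminates with an output.
   Context: A configuration is a finite simple undirected connected graph $G$ with $n$ nodes, each node $v$ having a non-negative integer wakeup tag $t_v$; the span $\sigma$ is the largest tag (the smallest tag being $0$). Algorithm Classifier (centralized, input $G$). It maintains a partition of the nodes into classes, with $\mathrm{class}(v)\in\{1,\ldots,\mathit{numClasses}\}$. Initially all nodes are in class $1$ and $\mathit{numClasses}=1$. One iteration (procedure Partitioner) does: for each node $v$, compute its label $L_v$, the set of triples obtained as follows: for each neighbour $w$ of $v$ with $\mathrm{class}(w)\ne\mathrm{class}(v)$ or $t_w\ne t_v$, form the pair $(\mathrm{class}(w),\sigma+1+t_w-t_v)$; for each distinct pair $(a,b)$ so formed, $L_v$ contains $(a,b,1)$ if exactly one such neighbour yields $(a,b)$ and $(a,b,* )$ if at least two do. Then the partition is refined: two nodes are in the same new class iff they were in the same class before the iteration and have equal labels; classes are renumbered $1,\ldots,\mathit{numClasses}$ with $\mathit{numClasses}$ the new number of classes. Main loop: for $i=1,\ldots,\lceil n/2\rceil$: let $\mathit{old}=\mathit{numClasses}$; perform one iteration; if some class contains exactly one node, output ''Yes'' and stop (the ''Yes'' condition); otherwise, if $\mathit{numClasses}=\mathit{old}$, output ''No'' and stop (the ''No'' condition). *)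

From mathcomp Require Import all_boot.
Set Implicit Arguments. Unset Strict Implicit. Unset Printing Implicit Defensive.

Section Classifier.
Variables (V : finType) (adj : rel V) (t : V -> nat).

Definition span : nat := \max_(v : V) t v.

(* a partition is represented by the map v |-> class of v (the set of nodes
   in the same class); the class identifier used in labels is this set *)
Definition partition := V -> {set V}.

Definition init_part : partition := fun _ => [set: V].

Definition label_pairs (cls : partition) (v : V) : seq ({set V} * nat) :=
  [seq (cls w, span.+1 + t w - t v)
    | w <- enum V & adj v w && ((cls w != cls v) || (t w != t v))].

(* the label L_v: triples (a, b, m) where m = false means "1" and
   m = true means "*" (at least two neighbours) *)
Definition label (cls : partition) (v : V) : seq ({set V} * nat * bool) :=
  [seq (p.1, p.2, 1 < count (pred1 p) (label_pairs cls v))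
    | p <- undup (label_pairs cls v)].

Definition label_eq (cls : partition) (u v : V) : bool :=
  all (fun x => x \in label cls v) (label cls u) &&
  all (fun x => x \in label cls u) (label cls v).

Definition partitioner (cls : partition) : partition :=
  fun v => [set u | (cls u == cls v) && label_eq cls u v].

Definition part_after (i : nat) : partition := iter i partitioner init_part.

Definition numClasses (cls : partition) : nat := #|[set cls v | v in V]|.

Definition yes_cond (i : nat) : Prop := exists v : V, #|part_after i v| = 1.

Definition no_cond (i : nat) : Prop :=
  numClasses (part_after i) = numClasses (part_after i.-1).

End Classifier.

Definition simple_graph (V : finType) (adj : rel V) : Prop :=
  irreflexive adj /\ symmetric adj.
Definition connected_graph (V : finType) (adj : rel V) : Prop :=
  forall x y : V, connect adj x y.

(* The map [part_after i] always sends a node to its class in a genuine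
   partition of the nodes, and each iteration of Partitioner refines it, so the
   number of classes never decreases.  If the "No" condition failed at every
   iteration 1..k, the count would therefore grow by at least one per
   iteration, giving more than k >= n/2 classes after iteration k; but a
   partition of n nodes into more than n/2 classes has a singleton class, which
   is the "Yes" condition at iteration k.  Neither the graph structure nor the
   tags play any role. *)
From mathcomp Require Import all_boot.

Set Implicit Arguments.
Unset Strict Implicit.
Unset Printing Implicit Defensive.

Lemma partition_singleton_block (T : finType) (P : {set {set T}}) (D : {set T}) :
  partition P D -> #|D| < #|P|.*2 -> exists2 A, A \in P & #|A| = 1.
Proof.
move=> partP; case: (pickP [pred A in P | #|A| == 1]) => [A /andP[PA /eqP]|no1].
  by exists A.
rewrite ltnNge => /negP[]; rewrite (card_partition partP) -muln2 -sum_nat_const.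
apply: leq_sum => A PA; have := no1 A; rewrite /= PA /=.
have := partition_neq0 partP PA; rewrite -card_gt0.
by case: #|A| => [|[|]].
Qed.

Section ClassMaps.

Variable V : finType.

Definition class_map (cls : V -> {set V}) :=
  forall u v, (u \in cls v) = (cls u == cls v).

Lemma class_map_of_equiv (R : rel V) :
  reflexive R -> symmetric R -> transitive R -> class_map (fun v => [set u | R u v]).
Proof.
move=> Rrefl Rsym Rtrans u v; rewrite inE; apply/idP/eqP => [Ruv | /= eq_uv].
  by apply/setP => w; rewrite !inE; apply/idP/idP => [/Rtrans-> | /Rtrans->];
    rewrite // Rsym.
have : u \in [set w | R w u] by rewrite inE.
by rewrite eq_uv inE.
Qed.

Variable cls : V -> {set V}.
Hypothesis cls_map : class_map cls.

Lemma mem_class v : v \in cls v.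
Proof. by rewrite cls_map. Qed.

Lemma partition_classes : partition [set cls v | v in V] [set: V].
Proof.
have -> : [set cls v | v in V] = preim_partition cls [set: V].
  apply/setP => A; apply/imsetP/imsetP => -[v _ ->]; exists v => //;
    apply/setP => u; rewrite !inE cls_map //= eq_sym.
exact: preim_partitionP.
Qed.

Lemma numClasses_refine (cls' : V -> {set V}) :
  (forall u v, cls u = cls v -> cls' u = cls' v) -> numClasses cls' <= numClasses cls.
Proof.
move=> refines; pose merge (S : {set V}) := \bigcup_(u in S) cls' u.
have merge_class v : merge (cls v) = cls' v.
  apply/setP => w; apply/bigcupP/idP => [[u] | cls'v_w].
    by rewrite cls_map => /eqP/refines->.
  by exists v; rewrite ?mem_class.
rewrite /numClasses; have -> : [set cls' v | v in V] = merge @: [set cls v | v in V].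
  by rewrite -imset_comp; apply: eq_imset => v; rewrite /= merge_class.
exact: leq_imset_card.
Qed.

Lemma exists_singleton_class :
  #|V| < (numClasses cls).*2 -> exists v, #|cls v| = 1.
Proof.
rewrite -cardsT => /(partition_singleton_block partition_classes)[_ /imsetP[v _ ->]].
by exists v.
Qed.

End ClassMaps.

Section Partitioner.

Variables (V : finType) (adj : rel V) (t : V -> nat).

Lemma label_eq_refl cls : reflexive (label_eq adj t cls).
Proof. by move=> u; rewrite /label_eq andbb; apply/allP. Qed.

Lemma label_eq_sym cls : symmetric (label_eq adj t cls).
Proof. by move=> u v; rewrite /label_eq andbC. Qed.

Lemma label_eq_trans cls : transitive (label_eq adj t cls).
Proof.
move=> v u w /andP[/allP uv /allP vu] /andP[/allP vw /allP wv].
by apply/andP; split; apply/allP => x x_in; [apply/vw/uv | apply/vu/wv].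
Qed.

Lemma partitioner_class_map cls : class_map (partitioner adj t cls).
Proof.
apply: (@class_map_of_equiv _ (fun u v => (cls u == cls v) && label_eq adj t cls u v)).
- by move=> u; rewrite eqxx label_eq_refl.
- by move=> u v; rewrite eq_sym label_eq_sym.
- move=> v u w /andP[/eqP-> uv] /andP[-> vw].
  exact: label_eq_trans uv vw.
Qed.

Lemma partitioner_refines cls u v :
  partitioner adj t cls u = partitioner adj t cls v -> cls u = cls v.
Proof.
move=> eq_uv; have := mem_class (partitioner_class_map cls) u.
by rewrite eq_uv inE => /andP[/eqP].
Qed.

Lemma numClasses_partitioner cls : numClasses cls <= numClasses (partitioner adj t cls).
Proof.
exact/(numClasses_refine (partitioner_class_map cls))/partitioner_refines.
Qed.

Lemma part_after_class_map i : class_map (part_after adj t i).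
Proof.
case: i => [|i] /=; last exact: partitioner_class_map.
by move=> u v; rewrite /part_after /init_part in_setT eqxx.
Qed.

Lemma no_cond_or_numClasses_gt (v0 : V) j :
  (exists2 i, 0 < i <= j & no_cond adj t i) \/ j < numClasses (part_after adj t j).
Proof.
elim: j => [|j [[i /andP[i_gt0 le_ij] no_i] | IH]].
- by right; apply/card_gt0P; exists (part_after adj t 0 v0); apply: imset_f.
- by left; exists i; rewrite // i_gt0 (leq_trans le_ij).
- have mono := numClasses_partitioner (part_after adj t j).
  have [same | changed] := eqVneq (numClasses (part_after adj t j.+1))
                                  (numClasses (part_after adj t j)).
    by left; exists j.+1; rewrite ?leqnn.
  right; apply: leq_ltn_trans IH _.
  by rewrite ltn_neqAle eq_sym changed; exact: mono.
Qed.

End Partitioner.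

Theorem lemma1 (V : finType) (adj : rel V) (t : V -> nat) :
  simple_graph adj -> connected_graph adj -> (exists v : V, t v = 0) ->
  exists i : nat, 1 <= i <= uphalf #|V| /\
    (yes_cond adj t i \/ no_cond adj t i).
Proof.
move=> _ _ [v0 _].
have [[i range_i no_i] | many] := no_cond_or_numClasses_gt adj t v0 (uphalf #|V|).
  by exists i; split; last right.
exists (uphalf #|V|); split.
  by rewrite uphalf_gt0 leqnn andbT; apply/card_gt0P; exists v0.
left; apply: exists_singleton_class (part_after_class_map adj t _) _.
by move: many; rewrite ltn_uphalf_double; apply: ltnW.
Qed.
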